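(* Let $A$ be an AUF algebra, let $e\in A$ be an idempotent, and let $e=\varepsilon_1+\cdots+\varepsilon_n$ with $\varepsilon_1,\dots,\varepsilon_n$ mutually orthogonal primitive idempotents. The following are equivalent: (1) $e$ is generating; (2) every primitive idempotent of $A$ is equivalent to $\varepsilon_i$ for some $i$; (3) every irreducible quasicoherent left $A$-module is isomorphic to $A\varepsilon_i/\mathrm{rad}(A\varepsilon_i)$ for some $i$.
   Context: All algebras are associative $\mathbb C$-algebras, not necessarily unital. An idempotent is $e$ with $e^2=e$; for idempotents $f\le e$ means $ef=fe=f$; a nonzero idempotent is primitive if its only sub-idempotents are $0$ and itself. An algebra $A$ is AUF if there is a family $(e_i)_{i\in\mathfrak I}$ of mutually orthogonal idempotents with $\dim e_iAe_j<\infty$ and $A=\sum_{i,j}e_iAe_j$. A left $A$-module $M$ is quasicoherent if $\xi\in A\xi$ for all $\xi\in M$. Irreducible means nonzero with no nonzero proper submodules. An idempotent $e$ is generating if every irreducible quasicoherent left $A$-module is a quotient of $Ae$. Two idempotents $p,q$ are equivalent if there are $u\in qAp$, $v\in pAq$ with $vu=p$, $uv=q$. For a primitive idempotent $\varepsilon$ of an AUF algebra, $A\varepsilon$ has a unique maximal proper left $A$-submodule, denoted $\mathrm{rad}(A\varepsilon)$. *)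

From HB Require Import structures.
From mathcomp Require Import all_boot all_order all_algebra.
From mathcomp Require Import complex.
From mathcomp Require Import Rstruct.
Set Implicit Arguments. Unset Strict Implicit. Unset Printing Implicit Defensive.
Import Order.TTheory GRing.Theory Num.Theory.
Local Open Scope ring_scope.

Definition CC : fieldType := (Rdefinitions.R)[i].

(* Associative, not necessarily unital C-algebras: a C-vector space with a
   bilinear associative multiplication. *)
Record Alg := {
  A_sort :> lmodType CC;
  amul : A_sort -> A_sort -> A_sort;
  amulA : forall x y z, amul x (amul y z) = amul (amul x y) z;
  amulDl : forall x y z, amul (x + y) z = amul x z + amul y z;
  amulDr : forall x y z, amul x (y + z) = amul x y + amul x z;
  amulZl : forall (c : CC) x y, amul (c *: x) y = c *: amul x y;
  amulZr : forall (c : CC) x y, amul x (c *: y) = c *: amul x y }.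

Record Mod (A : Alg) := {
  M_sort :> lmodType CC;
  act : A -> M_sort -> M_sort;
  actA : forall a b m, act (amul a b) m = act a (act b m);
  actDl : forall a b m, act (a + b) m = act a m + act b m;
  actDr : forall a m m', act a (m + m') = act a m + act a m';
  actZl : forall (c : CC) a m, act (c *: a) m = c *: act a m;
  actZr : forall (c : CC) a m, act a (c *: m) = c *: act a m }.

Section Defs.
Variable A : Alg.
Local Notation "x * y" := (amul x y) : ring_scope.

Definition is_idem (e : A) := e * e = e.

Definition orthogonal (e f : A) := e * f = 0 /\ f * e = 0.

Definition idem_le (f e : A) := e * f = f /\ f * e = f.

Definition primitive (e : A) :=
  is_idem e /\ e <> 0 /\
  forall f, is_idem f -> idem_le f e -> f = 0 \/ f = e.

Definition corner (e f : A) (x : A) := exists a : A, x = e * a * f.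

Definition fin_dim (P : A -> Prop) :=
  exists s : seq A, forall x, P x ->
    exists c : 'I_(size s) -> CC, x = \sum_(k < size s) c k *: s`_k.

Definition AUF :=
  exists (I : Type) (e : I -> A),
    (forall i, is_idem (e i)) /\
    (forall i j, i <> j -> e i * e j = 0) /\
    (forall i j, fin_dim (corner (e i) (e j))) /\
    (forall x : A, exists s : seq (I * I * A),
        x = \sum_(t <- s) e t.1.1 * t.2 * e t.1.2).

Definition idem_equiv (p q : A) :=
  exists u v, corner q p u /\ corner p q v /\ v * u = p /\ u * v = q.

Variable M : Mod A.

Definition quasicoherent := forall xi : M, exists a : A, act a xi = xi.

Definition submodule (P : M -> Prop) :=
  P 0 /\ (forall x y, P x -> P y -> P (x + y)) /\
  (forall (c : CC) x, P x -> P (c *: x)) /\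
  (forall a x, P x -> P (act a x)).

Definition irreducible :=
  (exists x : M, x <> 0) /\
  forall P, submodule P -> (forall x, P x -> x = 0) \/ (forall x, P x).

Definition Ae (e : A) (x : A) := exists a : A, x = a * e.

Definition hom_from_Ae (e : A) (f : A -> M) :=
  (forall x y, Ae e x -> Ae e y -> f (x + y) = f x + f y) /\
  (forall (c : CC) x, Ae e x -> f (c *: x) = c *: f x) /\
  (forall a x, Ae e x -> f (a * x) = act a (f x)).

Definition onto_from_Ae (e : A) (f : A -> M) :=
  forall m : M, exists2 x, Ae e x & f x = m.

Definition quotient_of_Ae (e : A) :=
  exists f : A -> M, hom_from_Ae e f /\ onto_from_Ae e f.

(* M is isomorphic to (A e) / N, N a submodule of A e (first isomorphism
   theorem: a surjective homomorphism A e -> M with kernel exactly N) *)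
Definition iso_quot_Ae (e : A) (N : A -> Prop) :=
  exists f : A -> M, hom_from_Ae e f /\ onto_from_Ae e f /\
    (forall x, Ae e x -> (f x = 0 <-> N x)).

End Defs.

Section Rad.
Variable A : Alg.
Local Notation "x * y" := (amul x y) : ring_scope.

Definition submod_Ae (e : A) (N : A -> Prop) :=
  (forall x, N x -> Ae e x) /\ N 0 /\
  (forall x y, N x -> N y -> N (x + y)) /\
  (forall (c : CC) x, N x -> N (c *: x)) /\
  (forall a x, N x -> N (a * x)).

Definition proper_submod_Ae (e : A) (N : A -> Prop) :=
  submod_Ae e N /\ exists2 x, Ae e x & ~ N x.

(* N = rad(A e): the proper submodule of A e containing every proper
   submodule (i.e. the unique maximal proper submodule) *)
Definition is_rad (e : A) (N : A -> Prop) :=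
  proper_submod_Ae e N /\
  forall P, proper_submod_Ae e P -> forall x, P x -> N x.

Definition generating (e : A) :=
  forall M : Mod A, irreducible M -> quasicoherent M -> quotient_of_Ae M e.

End Rad.

(* Everything rests on the corner p A p of a primitive idempotent p being a local
   algebra: it is finite-dimensional (A is AUF) and contains no idempotent other
   than 0 and p, so Fitting's argument makes each of its elements invertible or
   nilpotent, and its non-invertible elements are closed under addition. Hence
   A p / rad(A p) is an irreducible quasicoherent module on which p acts
   nontrivially, and two primitive idempotents acting nontrivially on a common
   irreducible module are equivalent. Conversely every irreducible quasicoherent
   module M is acted on nontrivially by a primitive idempotent, found by splitting
   an idempotent of the AUF family that does not kill M; the splitting stops
   because orthogonal idempotents in a finite-dimensional corner are linearly
   independent. So each of the three conditions says that every irreducible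
   quasicoherent module is acted on nontrivially by some eps_i, i.e. by e. *)

From HB Require Import structures.
From mathcomp Require Import all_boot all_order all_algebra.
From mathcomp Require Import complex Rstruct.
From Stdlib Require Import Classical ClassicalEpsilon.
Set Implicit Arguments. Unset Strict Implicit. Unset Printing Implicit Defensive.
Import Order.TTheory GRing.Theory Num.Theory.
Local Open Scope ring_scope.
Local Open Scope quotient_scope.
Local Infix "**" := amul (at level 40, left associativity).

Section AlgebraLemmas.
Variable A : Alg.
Implicit Types x y z : A.

Lemma amul0r x : 0 ** x = 0.
Proof. by have := amulZl 0 0 x; rewrite !scale0r. Qed.
Lemma amulr0 x : x ** 0 = 0.
Proof. by have := amulZr 0 x 0; rewrite !scale0r. Qed.
Lemma amulBl x y z : (x - y) ** z = x ** z - y ** z.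
Proof. by rewrite amulDl -scaleN1r amulZl scaleN1r. Qed.
Lemma amulBr x y z : x ** (y - z) = x ** y - x ** z.
Proof. by rewrite amulDr -scaleN1r amulZr scaleN1r. Qed.
Lemma amul_suml (I : Type) (r : seq I) (P : pred I) (F : I -> A) y :
  (\sum_(i <- r | P i) F i) ** y = \sum_(i <- r | P i) F i ** y.
Proof. by apply: (big_morph (fun z => z ** y)); [move=> u v; rewrite amulDl | rewrite amul0r]. Qed.
Lemma amul_sumr (I : Type) (r : seq I) (P : pred I) (F : I -> A) y :
  y ** (\sum_(i <- r | P i) F i) = \sum_(i <- r | P i) y ** F i.
Proof. by apply: (big_morph (amul y)); [move=> u v; rewrite amulDr | rewrite amulr0]. Qed.

Variable M : Mod A.

Lemma act0l (m : M) : act 0 m = 0.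
Proof. by have := actZl 0 0 m; rewrite !scale0r. Qed.
Lemma act0r a : act a (0 : M) = 0.
Proof. by have := actZr 0 a (0 : M); rewrite !scale0r. Qed.
Lemma act_suml (I : Type) (r : seq I) (P : pred I) (F : I -> A) (m : M) :
  act (\sum_(i <- r | P i) F i) m = \sum_(i <- r | P i) act (F i) m.
Proof. by apply: (big_morph (fun a => act a m)); [move=> a b; rewrite actDl | rewrite act0l]. Qed.

End AlgebraLemmas.

Section Span.
Variable A : Alg.

Definition in_span (s : seq A) (x : A) :=
  exists c : 'I_(size s) -> CC, x = \sum_(k < size s) c k *: s`_k.

Lemma in_span_natP s x :
  in_span s x <-> exists c : nat -> CC, x = \sum_(0 <= k < size s) c k *: s`_k.
Proof.
rewrite /in_span; split=> [[c ->]|[c ->]]; last by exists (c \o val); rewrite big_mkord.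
exists (fun k => if insub k is Some i then c i else 0).
by rewrite big_mkord; apply: eq_bigr => k _; rewrite valK.
Qed.

Lemma in_span0 s : in_span s 0.
Proof. by exists (fun=> 0); rewrite big1 // => k _; rewrite scale0r. Qed.

Lemma in_span_cat s s' x y : in_span s x -> in_span s' y -> in_span (s ++ s') (x + y).
Proof.
move=> /in_span_natP[c ->] /in_span_natP[c' ->]; apply/in_span_natP.
exists (fun k => if (k < size s)%N then c k else c' (k - size s)%N).
rewrite size_cat [RHS](@big_cat_nat _ _ _ (size s)) ?leq_addr //=; congr (_ + _).
  by apply: eq_big_nat => k /andP[_ ks]; rewrite ks nth_cat ks.
rewrite -{1}(add0n (size s)) big_addn addKn.
by apply: eq_big_nat => k _; rewrite nth_cat ltnNge leq_addl /= addnK.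
Qed.

Lemma span_dependent s vs : {in vs, forall v, in_span s v} -> (size s < size vs)%N ->
  exists2 c : 'I_(size vs) -> CC, exists j, c j != 0 &
    \sum_(k < size vs) c k *: vs`_k = 0.
Proof.
move=> vs_s lt_s_vs.
have /fin_all_exists[C vsC] (k : 'I_(size vs)) :
    exists c : 'I_(size s) -> CC, vs`_k = \sum_(l < size s) c l *: s`_l.
  exact/vs_s/mem_nth.
pose Mx : 'M[CC]_(size vs, size s) := \matrix_(k, l) C k l.
have : kermx Mx != 0.
  rewrite kermx_eq0 /row_free; apply: contraL lt_s_vs => /eqP <-.
  by rewrite -leqNgt rank_leq_col.
case/matrix0Pn=> i [j kerij]; exists (kermx Mx i); first by exists j.
under eq_bigr => k _ do rewrite vsC scaler_sumr.
rewrite exchange_big /= big1 // => l _.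
have ker0 : \sum_(k < size vs) kermx Mx i k * C k l = 0.
  have /matrixP/(_ i l) := mulmx_ker Mx; rewrite !mxE => ker0.
  by rewrite -[in RHS]ker0; apply: eq_bigr => k _; rewrite [Mx k l]mxE.
by under eq_bigr => k _ do rewrite scalerA; rewrite -scaler_suml ker0 scale0r.
Qed.

Lemma fin_dim_sub (P Q : A -> Prop) : (forall x, P x -> Q x) -> fin_dim Q -> fin_dim P.
Proof. by move=> PQ [s Qs]; exists s => x /PQ/Qs. Qed.

Lemma fin_dim_add (P Q : A -> Prop) :
  fin_dim P -> fin_dim Q -> fin_dim (fun x => exists y z, [/\ P y, Q z & x = y + z]).
Proof.
move=> [s Ps] [s' Qs']; exists (s ++ s') => x [y [z [/Ps Py /Qs' Qz ->]]].
exact: in_span_cat.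
Qed.

End Span.

Section AUFCorners.
Variable A : Alg.
Implicit Types u v w x y z f g : A.

Lemma cornerMl u b w x : corner (u ** b) w x -> corner u w x.
Proof. by case=> a ->; exists (b ** a); rewrite !amulA. Qed.

Lemma cornerMr u b w x : corner w (b ** u) x -> corner w u x.
Proof. by case=> a ->; exists (a ** b); rewrite !amulA. Qed.

Lemma fin_dim_corner0l w : fin_dim (corner 0 w).
Proof. by exists [::] => x [a ->]; rewrite !amul0r; apply: in_span0. Qed.

Lemma fin_dim_corner0r w : fin_dim (corner w 0).
Proof. by exists [::] => x [a ->]; rewrite amulr0; apply: in_span0. Qed.

Lemma fin_dim_cornerDl u v w :
  fin_dim (corner u w) -> fin_dim (corner v w) -> fin_dim (corner (u + v) w).
Proof.
move=> fdu fdv; apply: fin_dim_sub (fin_dim_add fdu fdv) => x [a ->].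
by exists (u ** a ** w), (v ** a ** w); split; [exists a | exists a | rewrite !amulDl].
Qed.

Lemma fin_dim_cornerDr u v w :
  fin_dim (corner w u) -> fin_dim (corner w v) -> fin_dim (corner w (u + v)).
Proof.
move=> fdu fdv; apply: fin_dim_sub (fin_dim_add fdu fdv) => x [a ->].
by exists (w ** a ** u), (w ** a ** v); split; [exists a | exists a | rewrite amulDr].
Qed.

Lemma AUF_fin_dim_corner : AUF A -> forall x y : A, fin_dim (corner x y).
Proof.
case=> I [e [_ [_ [fde spanning]]]] x y.
have fd_e i : fin_dim (corner (e i) y).
  have [s ->] := spanning y; elim/big_rec: _ => [|t z _ fdz].
    exact: fin_dim_corner0r.
  by apply: fin_dim_cornerDr fdz; apply: fin_dim_sub (fde i t.1.2) => v /cornerMr.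
have [s ->] := spanning x; elim/big_rec: _ => [|t z _ fdz].
  exact: fin_dim_corner0l.
by apply: fin_dim_cornerDl fdz; apply: fin_dim_sub (fd_e t.1.1) => v /cornerMl/cornerMl.
Qed.

(* The join of commuting idempotents; joining the e_i occurring in x yields a left unit of x. *)
Definition idem_join u v := u + v - u ** v.

Lemma idem_joinMr u f y : f ** f = f -> idem_join u f ** (f ** y) = f ** y.
Proof. by move=> ff; rewrite amulBl amulDl !amulA ff -(amulA u f f) ff addrAC subrr add0r. Qed.

Lemma idem_join_fixed u f z :
  u ** f = f ** u -> u ** z = z -> idem_join u f ** z = z.
Proof. by move=> uf uz; rewrite amulBl amulDl uz uf -amulA uz addrK. Qed.

Lemma idem_join_comm u f g :
  u ** g = g ** u -> f ** g = g ** f -> idem_join u f ** g = g ** idem_join u f.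
Proof.
move=> ug fg; rewrite amulBl amulDl amulBr amulDr ug fg.
by rewrite -amulA fg !amulA ug.
Qed.

Lemma AUF_local_unit : AUF A -> forall x : A, exists u, u ** x = x.
Proof.
case=> I [e [eid [eorth [_ spanning]]]] x.
have ecomm i j : e i ** e j = e j ** e i.
  by case: (classic (i = j)) => [-> | ij] //; rewrite !eorth // => /esym.
have [s ->] := spanning x.
suff [u [_ us]] : exists u, (forall j, u ** e j = e j ** u) /\
  u ** \sum_(t <- s) e t.1.1 ** t.2 ** e t.1.2 = \sum_(t <- s) e t.1.1 ** t.2 ** e t.1.2.
  by exists u.
elim: s => [|t s [u [ue us]]].
  by exists 0; split=> [j|]; rewrite ?big_nil amul0r ?amulr0.
exists (idem_join u (e t.1.1)); split=> [j|]; first exact: idem_join_comm.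
rewrite big_cons amulDr (idem_join_fixed (ue _) us) -!amulA idem_joinMr //; apply: eid.
Qed.

End AUFCorners.

Section IdempotentCorner.
Variables (A : Alg) (p : A).
Hypothesis pp : p ** p = p.
Implicit Types x y g w : A.

Definition in_corner x := p ** x = x /\ x ** p = x.

Lemma in_cornerM x y : in_corner x -> in_corner y -> in_corner (x ** y).
Proof. by move=> [px _] [_ yp]; split; rewrite ?amulA ?px // -amulA yp. Qed.

Lemma in_cornerD x y : in_corner x -> in_corner y -> in_corner (x + y).
Proof. by move=> [px xp] [py yp]; split; rewrite ?amulDr ?amulDl ?px ?xp ?py ?yp. Qed.

Lemma in_cornerZ c x : in_corner x -> in_corner (c *: x).
Proof. by move=> [px xp]; split; rewrite ?amulZr ?amulZl ?px ?xp. Qed.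

Lemma in_corner_sum (I : Type) (r : seq I) (P : pred I) (F : I -> A) :
  (forall i, P i -> in_corner (F i)) -> in_corner (\sum_(i <- r | P i) F i).
Proof.
move=> FB; apply: big_ind => //; last exact: in_cornerD.
by split; rewrite ?amulr0 ?amul0r.
Qed.

Lemma in_corner_compress w : in_corner (p ** w ** p).
Proof. by split; rewrite ?amulA ?pp // -!amulA pp. Qed.

Definition cpow x k := iter k (amul x) p.

Lemma cpowS x k : cpow x k.+1 = x ** cpow x k.
Proof. by []. Qed.

Lemma cpow_in_corner x k : in_corner x -> in_corner (cpow x k).
Proof. by move=> xB; elim: k => [|k IH] //; apply: in_cornerM. Qed.

Lemma cpowSr x k : in_corner x -> cpow x k.+1 = cpow x k ** x.
Proof.
move=> [px xp]; elim: k => [|k IH]; first by rewrite /= xp px.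
by rewrite [LHS]cpowS [in LHS]IH amulA.
Qed.

Lemma cpowD x m n : in_corner x -> cpow x (m + n) = cpow x m ** cpow x n.
Proof.
move=> xB; elim: m => [|m IH]; first by have [] := cpow_in_corner n xB.
by rewrite addSn /= IH amulA.
Qed.

Lemma cpow_comm x y k : in_corner y -> y ** x = x ** y -> y ** cpow x k = cpow x k ** y.
Proof.
move=> [py yp] yx; elim: k => [|k IH]; first by rewrite /= py yp.
by rewrite /= amulA yx -amulA IH amulA.
Qed.

Lemma cpowM x g k : in_corner g -> g ** x = x ** g ->
  cpow (x ** g) k = cpow x k ** cpow g k.
Proof.
move=> gB gx; elim: k => [|k IH] /=; first by rewrite pp.
by rewrite IH -amulA (amulA g) (cpow_comm _ gB gx) -!amulA.
Qed.

Variable M : Mod A.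

Lemma act_cpow x k (m : M) : act p m = m -> act x m = m -> act (cpow x k) m = m.
Proof. by move=> pm xm; elim: k => [|k IH] //=; rewrite actA IH. Qed.

End IdempotentCorner.

Section PrimitiveCorner.
Variables (A : Alg) (p : A).
Hypotheses (pp : p ** p = p) (p_fin_dim : fin_dim (corner p p)).
Hypothesis p_primitive : forall f, is_idem f -> idem_le f p -> f = 0 \/ f = p.
Implicit Types x y g w : A.
Local Notation in_corner := (in_corner p).
Local Notation cpow := (cpow p).

Lemma cpow_dependent x : in_corner x -> exists N (c : nat -> CC),
  (exists2 n, (n < N)%N & c n != 0) /\ \sum_(n < N) c n *: cpow x n = 0.
Proof.
move=> xB; have [s spans] := p_fin_dim.
pose vs := mkseq (cpow x) (size s).+1.
have vs_s : {in vs, forall v, in_span s v}.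
  move=> _ /mapP[k _ ->]; apply: spans; exists (cpow x k).
  by have [-> ->] := cpow_in_corner pp k xB.
have lt_s_vs : (size s < size vs)%N by rewrite size_mkseq.
have [c [j cj] c0] := span_dependent vs_s lt_s_vs.
exists (size vs), (fun n => if insub n is Some k then c k else 0); split.
  by exists j; rewrite ?ltn_ord // valK.
rewrite -[RHS]c0; apply: eq_bigr => k _; rewrite valK nth_mkseq //.
by rewrite -(size_mkseq (cpow x) (size s).+1) ltn_ord.
Qed.

Lemma cpow_relation x : in_corner x ->
  exists K g, [/\ in_corner g, g ** x = x ** g & cpow x K = cpow x K.+1 ** g].
Proof.
move=> xB; have [N [c [[n nN cn] c0]]] := cpow_dependent xB.
have [|K /andP[KN cK] Kmin] := ex_minnP (P := fun n => (n < N)%N && (c n != 0)).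
  by exists n; rewrite nN.
have c_ltK k : (k < K)%N -> c k = 0.
  move=> kK; apply/eqP/negPn/negP => ck.
  have /Kmin : (k < N)%N && (c k != 0) by rewrite ck (ltn_trans kK KN).
  by rewrite leqNgt kK.
pose T := \sum_(K.+1 <= k < N) c k *: cpow x (k - K.+1).
have xT : cpow x K.+1 ** T = - (c K *: cpow x K).
  apply/eqP; rewrite -addr_eq0 addrC -c0 -(big_mkord xpredT (fun k => c k *: cpow x k)).
  rewrite (@big_cat_nat _ _ _ K) ?(ltnW KN) // big_nat big1 => [|k /andP[_ /c_ltK->]];
    last exact: scale0r.
  rewrite Monoid.mul1m big_ltn // amul_sumr; apply/eqP; congr (_ + _).
  by apply: eq_big_nat => k /andP[Kk _]; rewrite amulZr -cpowD // subnKC.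
exists K, (- (c K)^-1 *: T); split.
- by apply/in_cornerZ/in_corner_sum => k _; apply/in_cornerZ/cpow_in_corner.
- rewrite amulZl amulZr amul_suml amul_sumr; congr (_ *: _).
  by apply: eq_bigr => k _; rewrite amulZl amulZr -cpowSr.
- by rewrite amulZr xT scalerN scaleNr opprK scalerA mulVf ?scale1r.
Qed.

Lemma cpow_fitting x g K : in_corner x -> in_corner g -> g ** x = x ** g ->
    cpow x K = cpow x K.+1 ** g ->
  (exists2 w, in_corner w & w ** x = p) \/ exists k, cpow x k = 0.
Proof.
move=> xB gB gx xK.
(* f := (x g)^(K+1) is an idempotent of the corner: f = 0 makes x nilpotent,
   f = p makes it invertible. *)
have xgB : in_corner (x ** g) by apply: in_cornerM.
have xSK_fixed k : cpow x K.+1 ** cpow (x ** g) k = cpow x K.+1.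
  elim: k => [|k IH]; first by have [] := cpow_in_corner pp K.+1 xB.
  rewrite [cpow (x ** g) _]cpowS !amulA -cpowSr // [cpow x K.+2]cpowS -(amulA x) -xK.
  by rewrite -[x ** cpow x K]/(cpow x K.+1) IH.
pose f := cpow (x ** g) K.+1.
have fE : f = cpow x K.+1 ** cpow g K.+1 by apply: cpowM.
have gSK_f_comm : cpow g K.+1 ** f = f ** cpow g K.+1.
  apply: cpow_comm; first exact: cpow_in_corner.
  by apply/esym/cpow_comm; rewrite // amulA gx.
have ff : is_idem f by rewrite /is_idem {1}fE -amulA gSK_f_comm amulA xSK_fixed -fE.
case: (p_primitive ff (cpow_in_corner pp K.+1 xgB)) => [f0 | fp].
  by right; exists K.+1; rewrite -(xSK_fixed K.+1) -/f f0 amulr0.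
left; exists (cpow x K ** cpow g K.+1).
  by apply: in_cornerM; apply: cpow_in_corner.
have xgJ : x ** cpow g K.+1 = cpow g K.+1 ** x by apply: cpow_comm.
by rewrite -amulA -xgJ amulA -cpowSr // -fE.
Qed.

Lemma corner_linv_or_nilpotent x : in_corner x ->
  (exists2 w, in_corner w & w ** x = p) \/ exists k, cpow x k = 0.
Proof.
move=> xB; have [K [g [gB gx xK]]] := cpow_relation xB.
exact: cpow_fitting gB gx xK.
Qed.

Lemma cpow_geometric n k : in_corner n -> cpow n k = 0 ->
  (\sum_(0 <= j < k) cpow n j) ** (p - n) = p.
Proof.
move=> nB nk; rewrite amul_suml.
under eq_bigr => j _ do rewrite amulBr -cpowSr // (proj2 (cpow_in_corner pp j nB)) -opprB.
by rewrite sumrN telescope_sumr // nk sub0r opprK.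
Qed.

Lemma corner_nonunitD x y : in_corner x -> in_corner y ->
  (forall w, w ** x <> p) -> (forall w, w ** y <> p) -> forall w, w ** (x + y) <> p.
Proof.
(* If w' (x + y) = p, then w' y is nilpotent and w' x = p - w' y is invertible. *)
move=> xB yB xnu ynu w wxy; pose w' := p ** w ** p.
have w'xy : w' ** (x + y) = p by rewrite -amulA (proj1 (in_cornerD xB yB)) -amulA wxy pp.
have nB : in_corner (w' ** y) by apply/in_cornerM/yB/in_corner_compress.
case: (corner_linv_or_nilpotent nB) => [[v _ vn] | [k nk]].
  by apply: (ynu (v ** w')); rewrite -amulA.
apply: (xnu ((\sum_(0 <= j < k) cpow (w' ** y) j) ** w')).
by rewrite -amulA -[w' ** x](addrK (w' ** y)) -amulDr w'xy cpow_geometric.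
Qed.

Lemma fixed_corner_linv (M : Mod A) t (m : M) :
  in_corner t -> act p m = m -> act t m = m -> m <> 0 -> exists2 w, in_corner w & w ** t = p.
Proof.
move=> tB pm tm m0; case: (corner_linv_or_nilpotent tB) => // -[k tk].
by case: m0; rewrite -(act_cpow k pm tm) tk act0l.
Qed.

End PrimitiveCorner.

Definition acts_nonzero (A : Alg) (M : Mod A) (e : A) := exists m : M, act e m <> 0.

Section IrreducibleModules.
Variables (A : Alg) (M : Mod A).
Hypothesis M_irr : irreducible M.
Implicit Types (a b e p q x : A) (m : M).

Lemma acts_nonzero_fixed e :
  is_idem e -> acts_nonzero M e -> exists2 m : M, act e m = m & m <> 0.
Proof. by move=> ee [m em]; exists (act e m) => //; rewrite -actA ee. Qed.

Lemma irreducible_cyclic a0 (m1 : M) : acts_nonzero M a0 -> m1 <> 0 ->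
  forall m, exists a, act a m1 = m.
Proof.
case: M_irr => _ irr [m2 a0m2] m1_neq0.
have [a1 a1m1] : exists a, act a m1 <> 0.
  apply: NNPP => none.
  have annP : submodule (fun m : M => forall a, act a m = 0).
    split=> [a|]; first exact: act0r.
    split=> [x y xa ya a|]; first by rewrite actDr xa ya addr0.
    split=> [c x xa a|b x xa a]; first by rewrite actZr xa scaler0.
    by rewrite -actA xa.
  case: (irr _ annP) => [ann0|annT]; last exact: a0m2 (annT _ _).
  by apply/m1_neq0/ann0 => a; apply: NNPP => ?; apply: none; exists a.
have cycP : submodule (fun m : M => exists a, act a m1 = m).
  split; first by exists 0; rewrite act0l.
  split=> [x y [a <-] [b <-]|]; first by exists (a + b); rewrite actDl.
  split=> [c x [a <-]|b x [a <-]]; first by exists (c *: a); rewrite actZl.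
  by exists (b ** a); rewrite actA.
by case: (irr _ cycP) => // cyc0; case: a1m1; apply: cyc0; exists a1.
Qed.

Lemma hom_from_Ae_act e (m0 : M) : hom_from_Ae e (fun x => act x m0).
Proof.
split=> [x y _ _|]; first exact: actDl.
by split=> [c x _|a x _]; [exact: actZl | exact: actA].
Qed.

Lemma onto_from_Ae_act e (m0 : M) :
  act e m0 = m0 -> m0 <> 0 -> onto_from_Ae e (fun x => act x m0).
Proof.
move=> em0 m0_neq0 m; have eM : acts_nonzero M e by exists m0; rewrite em0.
have [a am] := irreducible_cyclic eM m0_neq0 m.
by exists (a ** e); [exists a | rewrite actA em0].
Qed.

Lemma quotient_of_AeP e : is_idem e -> quotient_of_Ae M e <-> acts_nonzero M e.
Proof.
move=> ee; split=> [[f [[_ [_ fM]] onto]] | eM].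
  case: M_irr => [[xi xi_neq0] _]; have [_ [a ->] fx] := onto xi.
  have Aee : Ae e e by exists e; rewrite ee.
  exists (f e); rewrite -fM // ee => fe0.
  by apply: xi_neq0; rewrite -fx fM // fe0 act0r.
have [m0 em0 m0_neq0] := acts_nonzero_fixed ee eM.
by exists (fun x => act x m0); split; [apply: hom_from_Ae_act | apply: onto_from_Ae_act].
Qed.

Lemma idem_equiv_of_acts_nonzero p q : primitive p -> fin_dim (corner p p) -> primitive q ->
  acts_nonzero M p -> acts_nonzero M q -> idem_equiv p q.
Proof.
move=> [pp [p_neq0 p_prim]] p_fd [qq [_ q_prim]] pM qM.
have [m0 pm0 m0_neq0] := acts_nonzero_fixed pp pM.
have [m1 qm1 m1_neq0] := acts_nonzero_fixed qq qM.
have [a am0] := irreducible_cyclic pM m0_neq0 m1.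
pose u := q ** a ** p.
have um0 : act u m0 = m1 by rewrite !actA pm0 am0 qm1.
have [b bm1] := irreducible_cyclic pM m1_neq0 m0.
have [w [pw _] wbu] : exists2 w, in_corner p w & w ** (p ** b ** u) = p.
  apply: (fixed_corner_linv pp p_fd p_prim (m := m0)) => //.
    by split; rewrite ?amulA ?pp // /u -!amulA pp.
  by rewrite actA actA um0 bm1.
pose v := w ** p ** b ** q.
have vu : v ** u = p by rewrite -[RHS]wbu /v /u !amulA -(amulA _ q q) qq.
have up : u ** p = u by rewrite /u -amulA pp.
have z_idem : is_idem (u ** v) by rewrite /is_idem -amulA (amulA v) vu amulA up.
have z_le : idem_le (u ** v) q.
  by split; [rewrite amulA /u !amulA qq | rewrite -amulA /v -amulA qq].
case: (q_prim _ z_idem z_le) => [uv0 | uv].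
  by case: p_neq0; rewrite -pp -{1}vu -vu amulA -(amulA v u v) uv0 amulr0 amul0r.
exists u, v; split; first by exists a.
by split=> //; exists (w ** p ** b); rewrite /v !amulA pw.
Qed.

Definition ann_Ae e (m0 : M) x := Ae e x /\ act x m0 = 0.

Lemma is_rad_ann_Ae e (m0 : M) : primitive e -> fin_dim (corner e e) ->
  act e m0 = m0 -> m0 <> 0 -> is_rad e (ann_Ae e m0).
Proof.
move=> [ee [_ e_prim]] e_fd em0 m0_neq0; have eM : acts_nonzero M e by exists m0; rewrite em0.
split.
  split; last by exists e; [exists e; rewrite ee | case=> _; rewrite em0].
  split=> [x []//|]; split; first by split; [exists 0; rewrite amul0r | exact: act0l].
  split=> [x y [[a ->] xm] [[b ->] ym]|].
    by split; [exists (a + b); rewrite amulDl | rewrite actDl xm ym addr0].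
  split=> [c x [[a ->] xm]|b x [[a ->] xm]].
    by split; [exists (c *: a); rewrite amulZl | rewrite actZl xm scaler0].
  by split; [exists (b ** a); rewrite amulA | rewrite actA xm act0r].
move=> P [[P_Ae [_ [_ [_ PM]]]] [_ [c ->] Pce]] x Px; split; first exact: P_Ae.
apply: NNPP => xm0; have [b bxm] := irreducible_cyclic eM xm0 m0.
have xe : x ** e = x by have [d ->] := P_Ae _ Px; rewrite -amulA ee.
have [w _ wt] : exists2 w, in_corner e w & w ** (e ** b ** x) = e.
  apply: (fixed_corner_linv ee e_fd e_prim (m := m0)) => //.
    by split; rewrite ?amulA ?ee // -amulA xe.
  by rewrite !actA bxm em0.
have Pe : P e by rewrite -wt !amulA; apply: PM.
exact/Pce/PM.
Qed.

Lemma iso_quot_ann_Ae e (m0 : M) :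
  act e m0 = m0 -> m0 <> 0 -> iso_quot_Ae M e (ann_Ae e m0).
Proof.
move=> em0 m0_neq0; exists (fun x => act x m0).
split; [exact: hom_from_Ae_act | split; first exact: onto_from_Ae_act].
by move=> x ex; split=> [|[]].
Qed.

End IrreducibleModules.

Section LeftIdealQuotient.
Variable A : Alg.
Variable L : A -> Prop.
Hypotheses (L0 : L 0) (LD : forall x y, L x -> L y -> L (x + y))
  (LZ : forall c x, L x -> L (c *: x)) (LM : forall a x, L x -> L (a ** x)).

Definition cong_mod (x y : A) : bool :=
  if excluded_middle_informative (L (x - y)) then true else false.

Lemma cong_modP x y : reflect (L (x - y)) (cong_mod x y).
Proof. by rewrite /cong_mod; case: excluded_middle_informative => h; constructor. Qed.

Let LN x : L x -> L (- x).
Proof. by move/(LZ (-1)); rewrite scaleN1r. Qed.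

Lemma cong_mod_refl : reflexive cong_mod.
Proof. by move=> x; apply/cong_modP; rewrite subrr. Qed.
Lemma cong_mod_sym : symmetric cong_mod.
Proof.
by move=> x y; apply/cong_modP/cong_modP => /LN; rewrite opprB.
Qed.
Lemma cong_mod_trans : transitive cong_mod.
Proof.
move=> y x z /cong_modP Lxy /cong_modP Lyz; apply/cong_modP.
by rewrite -(subrK y x) -addrA; apply: LD.
Qed.

Definition lquot := {eq_quot EquivRel cong_mod cong_mod_refl cong_mod_sym cong_mod_trans}.
HB.instance Definition _ := EqQuotient.on lquot.
HB.instance Definition _ := Choice.on lquot.
Local Notation pi := \pi_lquot.

Lemma lquot_eqP x y : pi x = pi y <-> L (x - y).
Proof. by split => [/(eqquotP lquot)/cong_modP|/cong_modP/(eqquotP lquot)]. Qed.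

Lemma repr_lquot x : L (repr (pi x) - x).
Proof. by apply/lquot_eqP; rewrite reprK. Qed.

Definition lquot_add (u v : lquot) := pi (repr u + repr v).
Definition lquot_opp (u : lquot) := pi (- repr u).
Definition lquot_scale (c : CC) (u : lquot) := pi (c *: repr u).
Definition lquot_act (a : A) (u : lquot) := pi (a ** repr u).

Lemma lquot_addE x y : lquot_add (pi x) (pi y) = pi (x + y).
Proof. by apply/lquot_eqP; rewrite opprD addrACA; apply: LD; apply: repr_lquot. Qed.
Lemma lquot_oppE x : lquot_opp (pi x) = pi (- x).
Proof. by apply/lquot_eqP; rewrite -opprD; apply/LN/repr_lquot. Qed.
Lemma lquot_scaleE c x : lquot_scale c (pi x) = pi (c *: x).
Proof. by apply/lquot_eqP; rewrite -scalerBr; apply/LZ/repr_lquot. Qed.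
Lemma lquot_actE a x : lquot_act a (pi x) = pi (a ** x).
Proof. by apply/lquot_eqP; rewrite -amulBr; apply/LM/repr_lquot. Qed.

Lemma lquot_addA : associative lquot_add.
Proof.
elim/quotW=> x; elim/quotW=> y; elim/quotW=> z.
by rewrite (lquot_addE y) (lquot_addE x y) !lquot_addE addrA.
Qed.
Lemma lquot_addC : commutative lquot_add.
Proof. by elim/quotW=> x; elim/quotW=> y; rewrite !lquot_addE addrC. Qed.
Lemma lquot_add0 : left_id (pi 0) lquot_add.
Proof. by elim/quotW=> x; rewrite lquot_addE add0r. Qed.
Lemma lquot_addN : left_inverse (pi 0) lquot_opp lquot_add.
Proof. by elim/quotW=> x; rewrite lquot_oppE lquot_addE addNr. Qed.
HB.instance Definition _ := GRing.isZmodule.Build lquot lquot_addA lquot_addC lquot_add0 lquot_addN.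

Lemma pi_lquotD x y : pi x + pi y = pi (x + y). Proof. exact: lquot_addE. Qed.

Lemma lquot_scaleA c d u : lquot_scale c (lquot_scale d u) = lquot_scale (c * d) u.
Proof. by elim/quotW: u => x; rewrite (lquot_scaleE d) !lquot_scaleE scalerA. Qed.
Lemma lquot_scale1 : left_id 1 lquot_scale.
Proof. by elim/quotW=> x; rewrite lquot_scaleE scale1r. Qed.
Lemma lquot_scaleDr : right_distributive lquot_scale +%R.
Proof.
move=> c; elim/quotW=> x; elim/quotW=> y.
by rewrite pi_lquotD !lquot_scaleE pi_lquotD scalerDr.
Qed.
Lemma lquot_scaleDl u : {morph lquot_scale^~ u : c d / c + d}.
Proof. by elim/quotW: u => x c d; rewrite !lquot_scaleE pi_lquotD scalerDl. Qed.
HB.instance Definition _ :=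
  GRing.Zmodule_isLmodule.Build CC lquot lquot_scaleA lquot_scale1 lquot_scaleDr lquot_scaleDl.

Lemma pi_lquotZ c x : c *: pi x = pi (c *: x). Proof. exact: lquot_scaleE. Qed.

Lemma lquot_actA a b u : lquot_act (a ** b) u = lquot_act a (lquot_act b u).
Proof. by elim/quotW: u => x; rewrite (lquot_actE b) !lquot_actE amulA. Qed.
Lemma lquot_actDl a b u : lquot_act (a + b) u = lquot_act a u + lquot_act b u.
Proof. by elim/quotW: u => x; rewrite !lquot_actE pi_lquotD amulDl. Qed.
Lemma lquot_actDr a u v : lquot_act a (u + v) = lquot_act a u + lquot_act a v.
Proof.
elim/quotW: u => x; elim/quotW: v => y.
by rewrite pi_lquotD !lquot_actE pi_lquotD amulDr.
Qed.
Lemma lquot_actZl c a u : lquot_act (c *: a) u = c *: lquot_act a u.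
Proof. by elim/quotW: u => x; rewrite !lquot_actE pi_lquotZ amulZl. Qed.
Lemma lquot_actZr c a u : lquot_act a (c *: u) = c *: lquot_act a u.
Proof. by elim/quotW: u => x; rewrite pi_lquotZ !lquot_actE pi_lquotZ amulZr. Qed.

Definition lquot_mod : Mod A :=
  Build_Mod lquot_actA lquot_actDl lquot_actDr lquot_actZl lquot_actZr.
End LeftIdealQuotient.

Section SimpleModule.
Variables (A : Alg) (p : A).
Hypotheses (pp : p ** p = p) (p_neq0 : p <> 0) (p_fin_dim : fin_dim (corner p p)).
Hypothesis p_primitive : forall f, is_idem f -> idem_le f p -> f = 0 \/ f = p.
Hypothesis local_unit : forall x : A, exists u, u ** x = x.
Implicit Types a b x y : A.

(* rad(A p): since A p is generated by p, these are the elements of A p that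
   generate a proper submodule. *)
Definition in_radAp x := x ** p = x /\ forall b, b ** x <> p.

Lemma in_radAp0 : in_radAp 0.
Proof. by split=> [|b]; rewrite ?amul0r // amulr0 => /esym. Qed.

Lemma in_radApD x y : in_radAp x -> in_radAp y -> in_radAp (x + y).
Proof.
move=> [xp xnu] [yp ynu]; split=> [|b bxy]; first by rewrite amulDl xp yp.
have compressB z : z ** p = z -> in_corner p (p ** b ** z).
  by move=> zp; split; rewrite ?amulA ?pp // -amulA zp.
have compress_nu z : (forall c, c ** z <> p) -> forall w, w ** (p ** b ** z) <> p.
  by move=> znu w; rewrite !amulA; apply: znu.
apply: (corner_nonunitD pp p_fin_dim p_primitive (compressB _ xp) (compressB _ yp)
  (compress_nu _ xnu) (compress_nu _ ynu) (w := p)).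
by rewrite -amulDr -amulA bxy !pp.
Qed.

Lemma in_radApZ c x : in_radAp x -> in_radAp (c *: x).
Proof.
by move=> [xp xnu]; split=> [|b]; rewrite ?amulZl ?xp // amulZr -amulZl; apply: xnu.
Qed.

Lemma in_radApM a x : in_radAp x -> in_radAp (a ** x).
Proof. by move=> [xp xnu]; split=> [|b]; [rewrite -amulA xp | rewrite amulA; apply: xnu]. Qed.

(* x |-> x p identifies A / [simple_rel] with A p / rad(A p). *)
Definition simple_rel x := in_radAp (x ** p).

Lemma simple_rel0 : simple_rel 0.
Proof. by rewrite /simple_rel amul0r; apply: in_radAp0. Qed.
Lemma simple_relD x y : simple_rel x -> simple_rel y -> simple_rel (x + y).
Proof. by rewrite /simple_rel amulDl; apply: in_radApD. Qed.
Lemma simple_relZ c x : simple_rel x -> simple_rel (c *: x).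
Proof. by rewrite /simple_rel amulZl; apply: in_radApZ. Qed.
Lemma simple_relM a x : simple_rel x -> simple_rel (a ** x).
Proof. by rewrite /simple_rel -amulA; apply: in_radApM. Qed.

Definition simple_mod : Mod A := lquot_mod simple_rel0 simple_relD simple_relZ simple_relM.
Local Notation pi := (\pi_(lquot simple_rel0 simple_relD simple_relZ)).

Lemma simple_mod_pi_eq x y : (x - y) ** p = 0 -> pi x = pi y.
Proof. by move=> xy; apply/lquot_eqP; rewrite /simple_rel xy; apply: in_radAp0. Qed.

Lemma simple_mod_act_pi a x : act a (pi x : simple_mod) = pi (a ** x).
Proof. exact: lquot_actE simple_relM a x. Qed.

Lemma simple_mod_acts_nonzero : acts_nonzero simple_mod p.
Proof.
exists (pi p); rewrite simple_mod_act_pi pp => /lquot_eqP.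
by rewrite /simple_rel subr0 pp => -[_ /(_ p)].
Qed.

Lemma simple_mod_quasicoherent : quasicoherent simple_mod.
Proof.
elim/quotW=> x; have [u uxp] := local_unit (x ** p).
by exists u; rewrite simple_mod_act_pi; apply: simple_mod_pi_eq; rewrite amulBl -amulA uxp subrr.
Qed.

Lemma simple_mod_irreducible : irreducible simple_mod.
Proof.
split; first by have [m pm] := simple_mod_acts_nonzero; exists (act p m).
move=> P [_ [_ [_ PM]]]; case: (classic (exists2 m, P m & m <> 0)) => [[m Pm m0]|]; last first.
  by move=> none; left=> m Pm; apply: NNPP => m0; apply: none; exists m.
right; elim/quotW: m Pm m0 => y Py y0.
have [b byp] : exists b, b ** (y ** p) = p.
  apply: NNPP => none; apply: y0; apply/lquot_eqP; rewrite subr0.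
  by split=> [|b byp]; [rewrite -amulA pp | apply: none; exists b].
have Pp : P (pi p).
  have := PM b _ Py; rewrite simple_mod_act_pi (simple_mod_pi_eq (y := p)) //.
  by rewrite amulBl -amulA byp pp subrr.
elim/quotW=> z; have := PM z _ Pp; rewrite simple_mod_act_pi (simple_mod_pi_eq (y := z)) //.
by rewrite amulBl -amulA pp subrr.
Qed.
End SimpleModule.

Section PrimitiveExistence.
Variables (A : Alg) (M : Mod A).
Implicit Types (f g p q : A) (qs : seq A).

Definition orth_family qs := forall k l, (k < size qs)%N -> (l < size qs)%N -> k != l ->
  qs`_k ** qs`_l = 0.

Lemma orth_family_cons q qs : orth_family qs ->
  (forall r, r \in qs -> q ** r = 0 /\ r ** q = 0) -> orth_family (q :: qs).
Proof.
move=> qs_orth q_orth [|k] [|l] //= kq lq kl; last exact: qs_orth.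
  by have [] := q_orth _ (mem_nth 0 lq).
by have [] := q_orth _ (mem_nth 0 kq).
Qed.

(* Orthogonal nonzero idempotents are linearly independent. *)
Lemma orth_family_size s qs : orth_family qs ->
  (forall q, q \in qs -> [/\ is_idem q, q <> 0 & in_span s q]) -> (size qs <= size s)%N.
Proof.
move=> qs_orth qs_s; rewrite leqNgt; apply/negP => lt_s_qs.
have [|c [j cj] c0] := span_dependent _ lt_s_qs; first by move=> q /qs_s[].
have [qj_idem qj_neq0 _] := qs_s _ (mem_nth 0 (ltn_ord j)).
have := congr1 (amul qs`_j) c0; rewrite amul_sumr amulr0 (bigD1 j) //= big1 => [|k kj].
  rewrite addr0 amulZr qj_idem => /eqP; rewrite scaler_eq0 (negbTE cj) /=.
  by move/eqP.
by rewrite amulZr qs_orth ?scaler0 // eq_sym.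
Qed.

Definition family_under p qs :=
  orth_family qs /\ forall q, q \in qs -> [/\ is_idem q, q <> 0 & idem_le q p].

Lemma family_under_cons p f g qs : f ** g = 0 -> g ** f = 0 -> p = f + g ->
  is_idem g -> g <> 0 -> family_under f qs -> family_under p (g :: qs).
Proof.
move=> fg gf pfg gg g_neq0 [qs_orth qs_f]; split.
  apply: orth_family_cons => // q /qs_f[_ _ [fq qf]].
  by split; [rewrite -fq amulA gf amul0r | rewrite -qf -amulA fg amulr0].
move=> q; rewrite inE => /predU1P[-> | /qs_f[qq q_neq0 [fq qf]]].
  by split=> //; split; rewrite pfg ?amulDl ?amulDr gg ?fg ?gf add0r.
split=> //; split; rewrite pfg ?amulDl ?amulDr ?fq ?qf.
  by rewrite -fq amulA gf amul0r addr0.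
by rewrite -qf -amulA fg amulr0 addr0.
Qed.

Lemma primitive_below k p : is_idem p -> acts_nonzero M p ->
  (forall qs, family_under p qs -> (size qs < k)%N) ->
  exists2 p', primitive p' & acts_nonzero M p'.
Proof.
elim: k p => [|k IH] p pp pM p_small.
  have nil_under : family_under p [::] by split=> [k l|q]; rewrite ?ltn0 ?in_nil.
  by have := p_small _ nil_under.
have [p_prim | p_not_prim] := classic (primitive p); first by exists p.
have p_neq0 : p <> 0 by case: pM => m; apply: contra_not => ->; rewrite act0l.
have [f [ff [pf fp] f_neq0 f_neq_p]] : exists f, [/\ is_idem f, idem_le f p, f <> 0 & f <> p].
  apply: NNPP => none; apply: p_not_prim; split=> //; split=> // f ff fp.
  by apply: NNPP => /not_or_and[f0 fp']; apply: none; exists f.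
pose g := p - f.
have gg : is_idem g by rewrite /is_idem /g amulBl !amulBr pp pf fp ff subrr subr0.
have fg : f ** g = 0 by rewrite /g amulBr fp ff subrr.
have gf : g ** f = 0 by rewrite /g amulBl pf ff subrr.
have g_neq0 : g <> 0 by move/eqP; rewrite subr_eq0 => /eqP/esym.
have split_step f' g' : f' ** g' = 0 -> g' ** f' = 0 -> p = f' + g' ->
    is_idem f' -> is_idem g' -> g' <> 0 -> acts_nonzero M f' ->
    exists2 p', primitive p' & acts_nonzero M p'.
  move=> fg' gf' pfg' ff' gg' g'_neq0 fM; apply: IH ff' fM _ => qs qs_f.
  by have := p_small _ (family_under_cons fg' gf' pfg' gg' g'_neq0 qs_f).
have pfg : p = f + g by rewrite /g addrC subrK.
have [fM | fM0] := classic (acts_nonzero M f); first exact: split_step fg gf pfg ff gg g_neq0 fM.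
apply: (split_step g f) gf fg _ gg ff f_neq0 _; first by rewrite addrC.
case: pM => m pm; exists m => gm; apply: fM0; exists m => fm; apply: pm.
by rewrite pfg actDl fm gm addr0.
Qed.

Lemma AUF_primitive_acts_nonzero : AUF A -> irreducible M -> quasicoherent M ->
  exists2 p, primitive p & acts_nonzero M p.
Proof.
case=> I [e [eid [_ [fde spanning]]]] [[m m_neq0] _] M_qc.
have [j ejM] : exists j, acts_nonzero M (e j).
  apply: NNPP => none; have [a am] := M_qc m; have [s as_] := spanning a.
  apply: m_neq0; rewrite -am as_ act_suml big1 // => t _.
  rewrite -!amulA actA; apply: NNPP => tm; apply: none; exists t.1.1.
  by exists (act (t.2 ** e t.1.2) m).
have [s ej_s] := fde j j.
apply: (primitive_below (k := (size s).+1) (eid j) ejM) => qs [qs_orth qs_ej].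
rewrite ltnS; apply: orth_family_size qs_orth _ => q /qs_ej[qq q_neq0 [ejq qej]].
by split=> //; apply: ej_s; exists q; rewrite ejq qej.
Qed.

End PrimitiveExistence.

Lemma generating_iff (A : Alg) (e : A) : is_idem e ->
  generating e <-> forall M : Mod A, irreducible M -> quasicoherent M -> acts_nonzero M e.
Proof.
move=> ee; split=> gen M M_irr M_qc; first exact/(quotient_of_AeP M_irr ee)/gen.
exact/(quotient_of_AeP M_irr ee)/gen.
Qed.

Lemma acts_nonzero_sum (A : Alg) (M : Mod A) n (eps : 'I_n -> A) :
  (forall i, is_idem (eps i)) -> (forall i j, i != j -> eps i ** eps j = 0) ->
  acts_nonzero M (\sum_(i < n) eps i) <-> exists i, acts_nonzero M (eps i).
Proof.
move=> epsI eps_orth; split=> [[m em] | [i [m im]]].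
  apply: NNPP => none; apply: em; rewrite act_suml big1 // => i _.
  by apply: NNPP => im; apply: none; exists i, m.
exists (act (eps i) m); rewrite -actA amul_suml (bigD1 i) //= big1 => [|j ji].
  by rewrite addr0 epsI.
exact: eps_orth.
Qed.

Section PrimitiveFamily.
Variables (A : Alg) (I : Type) (eps : I -> A).
Hypotheses (HA : AUF A) (eps_prim : forall i, primitive (eps i)).

Definition detects_irreducibles :=
  forall M : Mod A, irreducible M -> quasicoherent M -> exists i, acts_nonzero M (eps i).

Lemma detects_irreduciblesP_equiv :
  detects_irreducibles <-> forall p, primitive p -> exists i, idem_equiv p (eps i).
Proof.
have fdA := AUF_fin_dim_corner HA.
split=> [detect p p_prim | equiv M M_irr M_qc].
  have [pp [p_neq0 p_min]] := p_prim.
  have S_irr := simple_mod_irreducible pp p_neq0 (fdA p p) p_min.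
  have [i iS] := detect _ S_irr (simple_mod_quasicoherent (AUF_local_unit HA)).
  exists i; apply: (idem_equiv_of_acts_nonzero S_irr p_prim (fdA p p) (eps_prim i)) iS.
  exact: simple_mod_acts_nonzero.
have [p p_prim [m pm]] := AUF_primitive_acts_nonzero HA M_irr M_qc.
have [i [u [v [[a ua] [_ [vu _]]]]]] := equiv p p_prim.
exists i; exists (act a (act p m)) => um; apply: pm.
by rewrite -vu actA ua !actA um act0r.
Qed.

Lemma detects_irreduciblesP_rad : detects_irreducibles <->
  forall M : Mod A, irreducible M -> quasicoherent M ->
    exists i N, is_rad (eps i) N /\ iso_quot_Ae M (eps i) N.
Proof.
have epsI i : is_idem (eps i) by case: (eps_prim i).
split=> [detect M M_irr M_qc | rad M M_irr M_qc].
  have [i iM] := detect M M_irr M_qc.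
  have [m0 im0 m0_neq0] := acts_nonzero_fixed (epsI i) iM.
  exists i, (ann_Ae (eps i) m0); split; last exact: iso_quot_ann_Ae.
  exact: is_rad_ann_Ae (eps_prim i) (AUF_fin_dim_corner HA _ _) im0 m0_neq0.
have [i [N [_ [f [f_hom [f_onto _]]]]]] := rad M M_irr M_qc.
by exists i; apply/(quotient_of_AeP M_irr (epsI i)); exists f.
Qed.

End PrimitiveFamily.

Theorem proposition6p2 (A : Alg) (HA : AUF A) (e : A) (He : is_idem e)
  (n : nat) (eps : 'I_n -> A)
  (Hprim : forall i, primitive (eps i))
  (Horth : forall i j, i != j -> amul (eps i) (eps j) = 0)
  (Hsum : e = \sum_(i < n) eps i) :
  (generating e <-> (forall p : A, primitive p -> exists i, idem_equiv p (eps i))) /\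
  (generating e <->
     (forall M : Mod A, irreducible M -> quasicoherent M ->
        exists i, exists N, is_rad (eps i) N /\ iso_quot_Ae M (eps i) N)).
Proof.
have epsI i : is_idem (eps i) by case: (Hprim i).
have gen_detects : generating e <-> detects_irreducibles eps.
  apply: iff_trans (generating_iff He) _; rewrite Hsum.
  by split=> H M M_irr M_qc; apply/(acts_nonzero_sum M epsI Horth)/H.
split; apply: iff_trans gen_detects _.
  exact: detects_irreduciblesP_equiv.
exact: detects_irreduciblesP_rad.
Qed.
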